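(* Let $q$ be a prime power with $q\equiv 3\pmod 4$, let $G=S_{q^2}$ be the symmetric group on the set $\mathbb{F}_q^2$, and let $H=\mathrm{AGL}_2(q)<G$ be the affine group acting naturally on $\mathbb{F}_q^2$. Then $H$ is a perfect code of $G$.
   Context: All groups are finite. For a group $G$ with identity $e$ and an inverse-closed subset $S\subseteq G\setminus\{e\}$, the Cayley graph $\mathrm{Cay}(G,S)$ has vertex set $G$ and edges $\{g,sg\}$ for $s\in S$, $g\in G$. A perfect code in a graph is an independent set $C$ of vertices such that every vertex outside $C$ is adjacent to exactly one vertex of $C$. A subgroup $H$ of $G$ is a perfect code of $G$ if some Cayley graph of $G$ admits $H$ as a perfect code. *)

From HB Require Import structures.
From mathcomp Require Import all_boot all_order all_algebra all_fingroup.
Import GRing.Theory.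
Local Open Scope ring_scope.
Set Implicit Arguments. Unset Strict Implicit. Unset Printing Implicit Defensive.
Import GRing.Theory.
Local Open Scope group_scope.

(* Cayley graph Cay(G,S): vertex set G, edges {g, s g} for s in S.
   So g and h are adjacent iff h * g^-1 \in S (symmetric as S = S^-1). *)
Definition cay_adj (gT : finGroupType) (S : {set gT}) (g h : gT) : bool :=
  h * g^-1 \in S.

Definition connection_set (gT : finGroupType) (G S : {set gT}) : Prop :=
  S \subset G :\ 1 /\ (forall s, s \in S -> s^-1 \in S).

Definition perfect_code_in_cay (gT : finGroupType) (G S C : {set gT}) : Prop :=
  [/\ C \subset G,
      (forall c1 c2, c1 \in C -> c2 \in C -> ~~ cay_adj S c1 c2) &
      (forall g, g \in G :\: C -> #|[set c in C | cay_adj S g c]| = 1%N)].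

Definition subgroup_perfect_code (gT : finGroupType) (G H : {set gT}) : Prop :=
  exists S : {set gT}, connection_set G S /\ perfect_code_in_cay G S H.

Definition AGL2 (F : finFieldType) : {set {perm 'rV[F]_2}} :=
  [set s : {perm 'rV[F]_2} | [exists A : 'M[F]_2, [exists b : 'rV[F]_2,
      (A \in unitmx) && [forall x, s x == (x *m A + b)%R]]]].

From HB Require Import structures.
From mathcomp Require Import all_boot all_order all_algebra all_fingroup.
From mathcomp Require Import cyclic zify.
Set Implicit Arguments. Unset Strict Implicit. Unset Printing Implicit Defensive.
Import GRing.Theory.

(* If T is an inverse-closed right transversal of H in G, then H is a perfect
   code of Cay(G, T :\: H).  As AGL_2(q) is 2-transitive, G = AGL_2(q) K for
   the stabiliser K of 0 and e1, and it suffices to find such a transversal for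
   R = AGL_2(q) :&: K in K.  It is built one pair RxR, Rx^-1R of double cosets
   at a time, by matching each right coset of R in RxR with one in Rx^-1R that
   contains the inverse of one of its elements; a self-inverse RxR with an odd
   number of right cosets also needs an involution in RxR.  If x^-1 = r1 x r2,
   then y = x r1 has y^2 in R, so an odd power of y is such an involution unless
   some power u of y of order 4 has u^2 in R.  But a nontrivial element of R
   moves exactly the q^2 - q points off the line F e1, the square of an element
   of order 4 moves a multiple of 4 points, and 4 does not divide q^2 - q when
   q = 3 mod 4. *)

Lemma split_halves (T : finType) (S : {set T}) : ~~ odd #|S| ->
  exists A B : {set T}, [/\ A :|: B = S, [disjoint A & B] & #|A| = #|B|].
Proof.
move=> evS; pose n := #|S|./2.
have sizeS : size (enum S) = n + n by rewrite -cardE addnn even_halfK.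
have := enum_uniq S; rewrite -(cat_take_drop n (enum S)) cat_uniq.
case/and3P=> _ disj _.
exists [set x in take n (enum S)], [set x in drop n (enum S)]; split.
- by apply/setP=> x; rewrite !inE -mem_cat cat_take_drop mem_enum.
- apply/pred0P=> x /=; rewrite !inE; apply/negbTE/andP=> -[xt xd].
  by case/hasP: disj; exists x.
- rewrite !cardsE !(card_uniqP _) ?(take_uniq, drop_uniq, enum_uniq) //.
  by rewrite size_takel ?size_drop sizeS ?addnK ?leq_addr.
Qed.

Lemma ndvd4_dvdn_odd_double n :
  ~~ (4 %| n) -> exists2 m, odd m & n %| m.*2.
Proof.
have [odd_n _|] := boolP (odd n); first by exists n; rewrite // -muln2 dvdn_mulr.
rewrite -dvdn2 => /dvdnP[h ->] ndvd4; exists h; last by rewrite -muln2.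
by apply: contraR ndvd4; rewrite -dvdn2 => /dvdnP[k ->]; rewrite -mulnA dvdn_mull.
Qed.

Lemma ndvd4_sqr_sub q : q %% 4 = 3 -> ~~ (4 %| q ^ 2 - q).
Proof. by move=> q3; rewrite /dvdn; lia. Qed.

Local Open Scope group_scope.

Definition inv_rtransversal (gT : finGroupType) (H G T : {set gT}) : Prop :=
  [/\ T \subset G, {in T, forall t, t^-1 \in T}
    & {in G, forall g, #|T :&: H :* g| = 1%N}].

Definition inv_transversal (gT : finGroupType) (O : {set {set gT}}) (T : {set gT})
  : Prop :=
  [/\ T \subset cover O, {in T, forall t, t^-1 \in T}
    & {in O, forall C, #|T :&: C| = 1%N}].

Definition inv_linked (gT : finGroupType) (Oa Ob : {set {set gT}}) : Prop :=
  {in Oa & Ob, forall A B : {set gT}, exists2 t, t \in A & t^-1 \in B}.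

Section DoubleCosets.

Variables (gT : finGroupType) (R : {group gT}).

Definition dcoset x : {set gT} := [set r1 * x * r2 | r1 in R, r2 in R].

Lemma mem_dcoset x r1 r2 : r1 \in R -> r2 \in R -> r1 * x * r2 \in dcoset x.
Proof. by move=> r1R r2R; apply/imset2P; exists r1 r2. Qed.

Lemma dcoset_refl x : x \in dcoset x.
Proof. by have := mem_dcoset x (group1 R) (group1 R); rewrite mulg1 mul1g. Qed.

Lemma dcosetMl x y r : r \in R -> y \in dcoset x -> r * y \in dcoset x.
Proof.
by move=> rR /imset2P[r1 r2 r1R r2R ->]; rewrite !mulgA mem_dcoset ?groupM.
Qed.

Lemma dcosetMr x y r : r \in R -> y \in dcoset x -> y * r \in dcoset x.
Proof.
by move=> rR /imset2P[r1 r2 r1R r2R ->]; rewrite -mulgA mem_dcoset ?groupM.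
Qed.

Lemma dcoset_eq x y : y \in dcoset x -> dcoset y = dcoset x.
Proof.
case/imset2P=> r1 r2 r1R r2R ->; apply/setP=> z; apply/imset2P/idP.
  case=> s1 s2 s1R s2R ->; apply: (dcosetMr s2R); apply: (dcosetMl s1R).
  exact: mem_dcoset.
case/imset2P=> a b aR bR ->; exists (a * r1^-1) (r2^-1 * b); rewrite ?groupM ?groupV //.
by rewrite !mulgA mulgKV mulgK.
Qed.

Lemma dcosetV x : dcoset x^-1 = (dcoset x)^-1.
Proof.
apply/setP=> z; rewrite inE; apply/imset2P/imset2P=> -[r1 r2 r1R r2R ez].
  by exists r2^-1 r1^-1; rewrite ?groupV // ez !invMg invgK mulgA.
by exists r2^-1 r1^-1; rewrite ?groupV // -[z]invgK ez !invMg mulgA.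
Qed.

Lemma mulG_dcoset x : R * dcoset x = dcoset x.
Proof.
apply/setP=> z; apply/mulsgP/idP=> [[r y rR yD ->]|zD]; first exact: dcosetMl.
by exists 1 z; rewrite ?mul1g.
Qed.

Lemma partition_rcosets_mul (A : {set gT}) : partition (rcosets R A) (R * A).
Proof.
apply/and3P; split.
- apply/eqP/setP=> z; apply/bigcupP/mulsgP.
    by case=> _ /rcosetsP[a aA ->] /rcosetP[r rR ->]; exists r a.
  case=> r a rR aA ->; exists (R :* a); first by apply/rcosetsP; exists a.
  by rewrite mem_rcoset mulgK.
- apply: trivIsetS (imsetS _ (subsetT A)) _.
  exact: partition_trivIset (rcosets_partition (subsetT R)).
- by apply/rcosetsP=> -[a _ /esym/setP/(_ a)]; rewrite rcoset_refl inE.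
Qed.

Lemma card_rcosets_dcosetV x :
  #|rcosets R (dcoset x^-1)| = #|rcosets R (dcoset x)|.
Proof.
have card_dcoset y : #|dcoset y| = (#|rcosets R (dcoset y)| * #|R|)%N.
  rewrite -{1}mulG_dcoset.
  apply: card_uniform_partition (partition_rcosets_mul _) => _ /rcosetsP[k _ ->].
  exact: card_rcoset.
apply/eqP; rewrite -(eqn_pmul2r (cardG_gt0 R)) -!card_dcoset.
by rewrite dcosetV card_invg.
Qed.

Lemma disjoint_rcosets_dcosetV x : x^-1 \notin dcoset x ->
  [disjoint rcosets R (dcoset x) & rcosets R (dcoset x^-1)].
Proof.
move=> xVD; apply/pred0P=> C /=; apply/negbTE/andP.
case=> /rcosetsP[y yD ->] /rcosetsP[z zD /rcoset_eqP/rcosetP[r rR eyz]].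
have /dcoset_eq eDx : y \in dcoset x^-1 by rewrite eyz dcosetMl.
by rewrite -(dcoset_eq yD) eDx dcoset_refl in xVD.
Qed.

Lemma inv_linked_dcoset x :
  inv_linked (rcosets R (dcoset x)) (rcosets R (dcoset x^-1)).
Proof.
move=> A B /rcosetsP[_ /imset2P[r1 r2 r1R r2R ->] ->].
case/rcosetsP=> _ /imset2P[s1 s2 s1R s2R ->] ->.
exists (s2^-1 * x * r2); apply/rcosetP.
  by exists (s2^-1 * r1^-1); rewrite ?groupM ?groupV // !mulgA mulgKV.
exists (r2^-1 * s1^-1); rewrite ?groupM ?groupV //.
by rewrite !invMg invgK !mulgA mulgKV.
Qed.

Lemma self_inverse_dcoset_involution x :
    (forall u : gT, #[u] = 4 -> u ^+ 2 \notin R) -> x^-1 \in dcoset x ->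
  exists2 t, t \in dcoset x & t ^+ 2 = 1.
Proof.
move=> noR /imset2P[r1 r2 r1R r2R ex]; set y := x * r1.
have yD : y \in dcoset x by rewrite dcosetMr ?dcoset_refl.
have y2R : y ^+ 2 \in R.
  have xr1x : x * r1 * x = r2^-1.
    by rewrite -(mulgK r2 (x * r1 * x)) -(mulgA x r1 x) -(mulgA x) -ex mulgV mul1g.
  have -> : y ^+ 2 = r2^-1 * r1 by rewrite expgS expg1 /y mulgA xr1x.
  by rewrite groupM ?groupV.
have [dvd4|ndvd4] := boolP (4 %| #[y]).
  have n4_dvd : #[y] %/ 4 %| #[y] by rewrite -{2}(divnK dvd4) dvdn_mulr.
  have /noR : #[y ^+ (#[y] %/ 4)] = 4.
    by rewrite orderXdiv // -{1}(divnK dvd4) mulKn // divn_gt0 // dvdn_leq.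
  by rewrite -expgM mulnC expgM groupX.
have [m odd_m ym] := ndvd4_dvdn_odd_double ndvd4.
exists (y ^+ m); last by apply/eqP; rewrite -expgM muln2 -order_dvdn.
rewrite -(odd_double_half m) odd_m add1n expgS -mul2n expgM.
by rewrite dcosetMr // groupX.
Qed.

Lemma rcosetsU (A B : {set gT}) : rcosets R (A :|: B) = rcosets R A :|: rcosets R B.
Proof. exact: imsetU. Qed.

Definition sym_dcoset x : {set gT} := dcoset x :|: dcoset x^-1.

Lemma sym_dcoset_eq x y : y \in sym_dcoset x -> sym_dcoset y = sym_dcoset x.
Proof.
have dcosetV_eq z w : w \in dcoset z -> dcoset w^-1 = dcoset z^-1.
  by move/dcoset_eq; rewrite !dcosetV => ->.
rewrite /sym_dcoset => /setUP[yD|yD]; rewrite (dcoset_eq yD) (dcosetV_eq _ _ yD) //.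
by rewrite invgK setUC.
Qed.

Lemma rcosets_sym_dcoset_eq x y C :
    C \in rcosets R (sym_dcoset x) -> C \in rcosets R (sym_dcoset y) ->
  sym_dcoset x = sym_dcoset y.
Proof.
case/rcosetsP=> a aS -> /rcosetsP[b bS /rcoset_eqP/rcosetP[r rR eab]].
rewrite -(sym_dcoset_eq aS) -(sym_dcoset_eq bS); apply: sym_dcoset_eq.
by rewrite eab inE dcosetMl ?dcoset_refl.
Qed.

End DoubleCosets.

Section InvTransversals.

Variables (gT : finGroupType) (R K : {group gT}).

Lemma rcosets_disjoint A B :
  A \in rcosets R K -> B \in rcosets R K -> A != B -> [disjoint A & B].
Proof.
by case/and3P: (rcosets_partition_mul K R) => _ /trivIsetP=> triv _; apply: triv.
Qed.

Lemma inv_transversal0 : inv_transversal (set0 : {set {set gT}}) set0.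
Proof. by split=> [|t|C]; rewrite ?sub0set ?inE. Qed.

Lemma inv_transversal_disjoint (O : {set {set gT}}) T C : O \subset rcosets R K ->
  C \in rcosets R K -> C \notin O -> inv_transversal O T -> T :&: C = set0.
Proof.
move=> sOK CK CO [sTO _ _]; apply/setP=> t; rewrite !inE.
apply/negbTE/andP=> -[/(subsetP sTO)/bigcupP[C' C'O tC'] tC].
have C'C : C' != C by apply: contraNneq CO => <-.
by rewrite (disjointFr (rcosets_disjoint (subsetP sOK _ C'O) CK C'C) tC') in tC.
Qed.

Lemma inv_transversalU (O1 O2 : {set {set gT}}) T1 T2 :
    O1 :|: O2 \subset rcosets R K -> [disjoint O1 & O2] ->
  inv_transversal O1 T1 -> inv_transversal O2 T2 ->
  inv_transversal (O1 :|: O2) (T1 :|: T2).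
Proof.
rewrite subUset => /andP[sO1 sO2] O12 tr1 tr2; case: (tr1) (tr2).
move=> sT1 VT1 T1C [sT2 VT2 T2C]; split.
- by rewrite /cover bigcup_setU setUSS.
- by move=> t /setUP[/VT1|/VT2] Vt; rewrite inE Vt ?orbT.
move=> C /setUP[CO1|CO2]; rewrite setIUl.
  rewrite (inv_transversal_disjoint sO2 _ _ tr2) ?setU0 ?T1C ?(subsetP sO1) //.
  by rewrite (disjointFr O12 CO1).
rewrite (inv_transversal_disjoint sO1 _ _ tr1) ?set0U ?T2C ?(subsetP sO2) //.
by rewrite (disjointFl O12 CO2).
Qed.

Lemma inv_transversal_pair A B t :
    A \in rcosets R K -> B \in rcosets R K -> t \in A -> t^-1 \in B ->
  (A = B -> t^-1 = t) -> inv_transversal [set A; B] [set t; t^-1].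
Proof.
move=> AK BK tA tVB ABt; split.
- by apply/subsetP=> s; rewrite !inE => /orP[]/eqP->; apply/bigcupP;
    [exists A | exists B]; rewrite ?inE ?eqxx ?orbT.
- by move=> s; rewrite !inE => /orP[]/eqP->; rewrite ?invgK eqxx ?orbT.
have [eAB|AB] := eqVneq A B.
  move=> C; rewrite -eAB ABt // !setUid inE => /eqP->.
  by rewrite (setIidPl _) ?sub1set ?cards1.
have disjAB := rcosets_disjoint AK BK AB.
have tB : t \notin B by rewrite (disjointFr disjAB tA).
have tVA : t^-1 \notin A by rewrite (disjointFl disjAB tVB).
move=> C; rewrite !inE => /orP[]/eqP->; rewrite setIUl.
  by rewrite (setIidPl _) ?sub1set // disjoint_setI0 ?disjoints1 // setU0 cards1.
rewrite [[set t^-1] :&: _](setIidPl _) ?sub1set //.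
by rewrite disjoint_setI0 ?disjoints1 // set0U cards1.
Qed.

Lemma inv_transversal1 A t :
  A \in rcosets R K -> t \in A -> t^-1 = t -> inv_transversal [set A] [set t].
Proof.
move=> AK tA tV; have := inv_transversal_pair AK AK tA _ (fun _ => tV).
by rewrite tV !setUid; apply.
Qed.

Lemma inv_transversal_matching (Oa Ob : {set {set gT}}) :
    Oa :|: Ob \subset rcosets R K -> [disjoint Oa & Ob] -> #|Oa| = #|Ob| ->
  inv_linked Oa Ob -> exists T, inv_transversal (Oa :|: Ob) T.
Proof.
have [n] := ubnP #|Oa|; elim: n Oa Ob => // n IH Oa Ob ltOa sOK dOab eqOab link.
have [Oa0|[A AOa]] := set_0Vmem Oa.
  move: eqOab; rewrite Oa0 cards0 => /esym/eqP; rewrite cards_eq0 => /eqP->.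
  by exists set0; rewrite setU0; apply: inv_transversal0.
have /card_gt0P[B BOb] : 0 < #|Ob| by rewrite -eqOab (cardsD1 A) AOa.
have [t tA tVB] := link A B AOa BOb.
have AOb : A \notin Ob by rewrite (disjointFr dOab AOa).
have BOa : B \notin Oa by rewrite (disjointFl dOab BOb).
have [|||||T' trT'] := IH (Oa :\ A) (Ob :\ B).
- by move: ltOa; rewrite (cardsD1 A) AOa.
- exact: subset_trans (setUSS (subsetDl _ _) (subsetDl _ _)) sOK.
- exact: disjointW (subsetDl _ _) (subsetDl _ _) dOab.
- by move: eqOab; rewrite (cardsD1 A Oa) (cardsD1 B Ob) AOa BOb => /addnI.
- by move=> A' B' /setD1P[_ A'Oa] /setD1P[_ B'Ob]; apply: link.
have eqO : Oa :|: Ob = [set A; B] :|: (Oa :\ A :|: Ob :\ B).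
  by rewrite setUACA !setD1K.
exists ([set t; t^-1] :|: T'); rewrite eqO; apply: inv_transversalU => //.
- by rewrite -eqO.
- apply/pred0P=> C /=; rewrite !inE; apply/negbTE.
  by case: eqP => [->|_]; case: eqP => [->|_]; rewrite ?andbF ?AOb ?BOa ?orbF.
apply: inv_transversal_pair tA tVB _; rewrite ?(subsetP sOK) ?inE ?AOa ?BOb ?orbT //.
by move=> eAB; rewrite eAB BOb in AOb.
Qed.

Lemma even_inv_transversal (O : {set {set gT}}) :
    O \subset rcosets R K -> ~~ odd #|O| -> inv_linked O O ->
  exists T, inv_transversal O T.
Proof.
move=> sOK evO link; have [Oa [Ob [eO dOab eqOab]]] := split_halves evO.
rewrite -eO in sOK *; apply: inv_transversal_matching => // A B AOa BOb.
by apply: link; rewrite -eO inE ?AOa ?BOb ?orbT.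
Qed.

Hypothesis sRK : R \subset K.

Lemma rcosets_sym_dcoset_sub x :
  x \in K -> rcosets R (sym_dcoset R x) \subset rcosets R K.
Proof.
move=> xK; have rK := subsetP sRK.
by apply: imsetS; apply/subsetP=> _ /setUP[]/imset2P[r1 r2 r1R r2R ->];
  rewrite groupMr ?groupMl ?groupV ?(rK r1) ?(rK r2).
Qed.

Hypothesis dcoset_involution : {in K, forall x, x^-1 \in dcoset R x ->
  odd #|rcosets R (dcoset R x)| -> exists2 t, t \in dcoset R x & t ^+ 2 = 1}.

Lemma sym_dcoset_inv_transversal x :
  x \in K -> exists T, inv_transversal (rcosets R (sym_dcoset R x)) T.
Proof.
move=> xK; have := rcosets_sym_dcoset_sub xK; rewrite /sym_dcoset rcosetsU => sOK.
have [xVD|xVD] := boolP (x^-1 \in dcoset R x); last first.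
  apply: inv_transversal_matching => //; last exact: inv_linked_dcoset.
    by rewrite disjoint_rcosets_dcosetV.
  by rewrite card_rcosets_dcosetV.
have eD : dcoset R x^-1 = dcoset R x := dcoset_eq xVD.
rewrite eD setUid in sOK *; set O := rcosets R (dcoset R x) in sOK *.
have link : inv_linked O O by have := inv_linked_dcoset (R := R) (x := x); rewrite eD.
have [oddO|] := boolP (odd #|O|); last by move/even_inv_transversal; apply.
have [t tD t2] := dcoset_involution xK xVD oddO.
have tV : t^-1 = t by apply/eqP; rewrite eq_invg_mul -[t * t]/(t ^+ 2) t2.
have tO : R :* t \in O by apply/rcosetsP; exists t.
have [|||T trT] := even_inv_transversal (O := O :\ R :* t).
- exact: subset_trans (subsetDl _ _) sOK.
- by move: oddO; rewrite (cardsD1 (R :* t)) tO.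
- by move=> A B /setD1P[_ AO] /setD1P[_ BO]; apply: link.
exists (t |: T); rewrite -(setD1K tO); apply: inv_transversalU => //.
- by rewrite setD1K.
- by rewrite disjoints1 !inE eqxx.
by apply: inv_transversal1; rewrite ?(subsetP sOK) ?rcoset_refl.
Qed.

Lemma inv_transversal_rcosets : exists T, inv_transversal (rcosets R K) T.
Proof.
suff: forall O : {set {set gT}}, O \subset rcosets R K ->
    {in K, forall k, R :* k \in O -> rcosets R (sym_dcoset R k) \subset O} ->
  exists T, inv_transversal O T.
  by apply=> // k kK _; apply: rcosets_sym_dcoset_sub.
move=> O; have [n] := ubnP #|O|; elim: n O => // n IH O ltO sOK closedO.
have [->|[C CO]] := set_0Vmem O; first by exists set0; apply: inv_transversal0.
have /rcosetsP[k kK eC] := subsetP sOK C CO.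
set B := rcosets R (sym_dcoset R k).
have kB : R :* k \in B by apply/rcosetsP; exists k; rewrite ?inE ?dcoset_refl.
have sBO : B \subset O by apply: closedO; rewrite -?eC.
have [|||T' trT'] := IH (O :\: B).
- rewrite -ltnS (leq_trans _ ltO) // ltnS proper_card //; apply/properP.
  by split; [apply: subsetDl | exists C; rewrite // inE eC kB].
- exact: subset_trans (subsetDl _ _) sOK.
- move=> k2 k2K /setDP[k2O k2B]; apply/subsetP=> C2 C2B2.
  rewrite inE (subsetP (closedO k2 k2K k2O)) // andbT; apply: contra k2B => C2B.
  rewrite /B -(rcosets_sym_dcoset_eq C2B2 C2B).
  by apply/rcosetsP; exists k2; rewrite ?inE ?dcoset_refl.
have [TB trTB] := sym_dcoset_inv_transversal kK.
have eO : B :|: O :\: B = O by rewrite -{2}(setID O B) (setIidPr sBO).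
exists (TB :|: T'); rewrite -eO; apply: inv_transversalU => //; first by rewrite eO.
by apply/pred0P=> D /=; rewrite !inE; case: (D \in B).
Qed.

Theorem inv_rtransversal_exists : exists T, inv_rtransversal R K T.
Proof.
have [T [sTK VT TC]] := inv_transversal_rcosets; exists T; split=> //.
  by rewrite (cover_partition (rcosets_partition sRK)) in sTK.
by move=> k kK; apply: TC; apply/rcosetsP; exists k.
Qed.

End InvTransversals.

Section PerfectCodes.

Variable gT : finGroupType.

Lemma inv_rtransversal_mul (H K : {group gT}) (T : {set gT}) :
  inv_rtransversal (H :&: K) K T -> inv_rtransversal H (H * K) T.
Proof.
case=> sTK VT TC; split=> //; first exact: subset_trans sTK (mulG_subr H K).
move=> _ /mulsgP[h k hH kK ->]; rewrite rcosetM rcoset_id // -(TC k kK).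
apply: eq_card=> t; rewrite !inE !mem_rcoset.
case tT: (t \in T) => //=.
by rewrite inE [_ \in K](groupMr _ (groupVr kK)) (subsetP sTK) ?andbT.
Qed.

Lemma inv_rtransversal_perfect_code (G H : {group gT}) (T : {set gT}) :
  H \subset G -> inv_rtransversal H G T -> subgroup_perfect_code G H.
Proof.
move=> sHG [sTG VT TC]; exists (T :\: H); split; last split=> //.
- split; first by apply/subsetP=> t /setDP[tT tH]; rewrite !inE (subsetP sTG) //
    andbT; apply: contraNneq tH => ->.
  by move=> t /setDP[tT tH]; rewrite !inE groupV tH VT.
- by move=> c1 c2 c1H c2H; rewrite /cay_adj inE groupM ?groupV.
move=> g /setDP[gG gH]; rewrite -(TC g^-1) ?groupV //.
rewrite -(card_rcoset (T :&: H :* g^-1) g); apply: eq_card=> c.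
rewrite /cay_adj mem_rcoset !inE mem_rcoset invgK mulgKV andbC.
by case: (c \in H) / boolP => cH; rewrite ?andbF //= groupMl // groupV gH.
Qed.

End PerfectCodes.

Lemma order4_sqr_in_cycle (gT : finGroupType) (u v : gT) :
  #[u] = 4 -> v \in <[u]> -> v != 1 -> u ^+ 2 \in <[v]>.
Proof.
move=> ou /cyclePmin[i]; rewrite ou; case: i => [|[|[|[|//]]]] _ -> //.
- by rewrite eqxx.
- by rewrite mem_cycle.
- by rewrite cycle_id.
have -> : u ^+ 2 = (u ^+ 3) ^+ 2 by rewrite -expgM -(expg_mod_order u 6) ou.
by rewrite mem_cycle.
Qed.

Lemma order4_dvd_card_moved (T : finType) (u : {perm T}) :
  #[u] = 4 -> 4 %| #|[set p | (u ^+ 2) p != p]|.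
Proof.
move=> ou; set W := [set p | _].
have actsW : [acts <[u]>, on W | 'P].
  rewrite cycle_subG; apply/astabsP=> p; rewrite !inE /= !apermE -!permM.
  by rewrite -expgS expgSr permM (inj_eq perm_inj).
rewrite -(acts_sum_card_orbit actsW) dvdn_sum // => _ /imsetP[p pW ->].
have stab1 : 'C_<[u]>[p | 'P] = 1.
  apply/trivgP/subsetP=> v /setIP[vu vp]; apply/set1P/eqP/negbNE/negP => v1.
  have sub : <[v]> \subset 'C[p | 'P] by rewrite cycle_subG.
  have /astab1P := subsetP sub _ (order4_sqr_in_cycle ou vu v1).
  by move=> /= /eqP; rewrite inE in pW; apply/negP.
by rewrite card_orbit stab1 indexg1 -orderE ou.
Qed.

Section RowVectors.

Local Open Scope ring_scope.

Lemma unitmx_transitive (F : fieldType) n (u v : 'rV[F]_n) :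
  u != 0 -> v != 0 -> exists2 A, A \in unitmx & u *m A = v.
Proof.
move=> u0 v0; have /row_freeP[B uB] : row_free u by rewrite /row_free rank_rV u0.
have rk : \rank (u *m (B *m v)) = \rank u by rewrite mulmxA uB mul1mx !rank_rV u0 v0.
have [A unitA eA] := complete_unitmx rk.
by exists A; rewrite // -eA mulmxA uB mul1mx.
Qed.

Lemma ord2P (j : 'I_2) : j = 0 \/ j = 1.
Proof. by case: j => -[|[|//]] ?; [left | right]; apply: val_inj. Qed.

End RowVectors.

Section AffinePlane.

Variable F : finFieldType.
Local Notation V := 'rV[F]_2.
Local Open Scope ring_scope.

Definition e1 : V := delta_mx 0 0.

Lemma e1_neq0 : e1 != 0.
Proof. by apply/eqP=> /rowP/(_ 0)/eqP; rewrite !mxE oner_eq0. Qed.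

Lemma row2_span (p v : V) : p 0 1 != 0 ->
  v = (v 0 0 - v 0 1 / p 0 1 * p 0 0) *: e1 + (v 0 1 / p 0 1) *: p.
Proof.
move=> p01; apply/rowP=> j; rewrite !mxE.
by case: (ord2P j) => ->; rewrite /= ?mulr1 ?mulr0 ?add0r ?subrK ?divfK.
Qed.

Lemma row2_line (p : V) : p 0 1 = 0 -> p = p 0 0 *: e1.
Proof.
move=> p01; apply/rowP=> j; rewrite !mxE.
by case: (ord2P j) => ->; rewrite /= ?mulr1 ?mulr0.
Qed.

Lemma fixed_e1_line (A : 'M[F]_2) (p : V) :
  e1 *m A = e1 -> p 0 1 != 0 -> p *m A = p -> A = 1%:M.
Proof.
move=> e1A p01 pA; apply/row_matrixP=> i; rewrite !rowE mulmx1.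
by rewrite [X in X *m _](row2_span _ p01) mulmxDl -!scalemxAl e1A pA -row2_span.
Qed.

Lemma card_off_line : #|[set p : V | p 0 1 != 0]| = (#|F| ^ 2 - #|F|)%N.
Proof.
have line : ~: [set p : V | p 0 1 != 0] = [set a *: e1 | a : F].
  apply/setP=> p; rewrite !inE negbK; apply/eqP/imsetP=> [p01|[a _ ->]].
    by exists (p 0 0); rewrite // -row2_line.
  by rewrite !mxE mulr0.
have inj_e1 : injective (fun a : F => a *: e1).
  by move=> a b /rowP/(_ 0); rewrite !mxE /= !mulr1.
by rewrite cardsCs line card_imset // card_mx.
Qed.

Local Open Scope group_scope.

Lemma AGL2P (s : {perm V}) :
  reflect (exists A b, A \in unitmx /\ forall x, s x = x *m A + b)%R (s \in AGL2 F).
Proof.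
rewrite inE; apply: (iffP existsP) => [[A /existsP[b /andP[uA /forallP sE]]]|].
  by exists A, b; split=> // x; apply/eqP.
case=> A [b [uA sE]]; exists A; apply/existsP; exists b.
by rewrite uA; apply/forallP=> x; rewrite sE.
Qed.

Lemma AGL2_group_set : group_set (AGL2 F).
Proof.
apply/group_setP; split.
  by apply/AGL2P; exists 1%:M, 0; split=> [|x]; rewrite ?unitmx1 ?perm1 ?mulmx1 ?addr0.
move=> s t /AGL2P[A [b [uA sE]]] /AGL2P[A' [b' [uA' tE]]]; apply/AGL2P.
exists (A *m A'), (b *m A' + b'); split=> [|x]; first by rewrite unitmx_mul uA.
by rewrite permM sE tE mulmxDl mulmxA addrA.
Qed.
Canonical AGL2_group := Group AGL2_group_set.

Definition stab0e1 : {group {perm V}} := 'C([set 0; e1] | 'P)%G.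

Lemma AGL2_two_transitive (a b : V) :
  a != b -> exists2 h, h \in AGL2 F & h 0 = a /\ h e1 = b.
Proof.
move=> ab; have ba0 : b - a != 0 by rewrite subr_eq0 eq_sym.
have [A uA e1A] := unitmx_transitive e1_neq0 ba0.
have inj_h : injective (fun x : V => x *m A + a).
  by move=> x y /addIr/(row_free_inj _)->; rewrite ?row_free_unit.
exists (perm inj_h); first by apply/AGL2P; exists A, a; split=> // x; rewrite permE.
by rewrite !permE mul0mx add0r e1A subrK.
Qed.

Lemma AGL2_mul_stab0e1 : AGL2 F * stab0e1 = setT.
Proof.
apply/setP=> g; rewrite inE; apply/mulsgP.
have [|h hA [h0 he1]] := @AGL2_two_transitive ((g^-1)%g 0) ((g^-1)%g e1).
  by rewrite (inj_eq perm_inj) eq_sym e1_neq0.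
exists h^-1 (h * g); rewrite ?groupV ?mulKg //.
apply/astabP=> x; rewrite !inE => /orP[]/eqP->.
  by rewrite /= apermE permM h0 permKV.
by rewrite /= apermE permM he1 permKV.
Qed.

Lemma AGL2_stab0e1_linear r : r \in AGL2 F :&: stab0e1 ->
  exists2 A : 'M[F]_2, forall x, r x = x *m A & e1 *m A = e1.
Proof.
case/setIP=> /AGL2P[A [b [_ rE]]] /astabP r0e1.
have b0 : b = 0 by have := r0e1 0; rewrite !inE eqxx /= apermE rE mul0mx add0r => ->.
exists A => [x|]; first by rewrite rE b0 addr0.
by have := r0e1 e1; rewrite !inE eqxx orbT /= apermE rE b0 addr0 => ->.
Qed.

Lemma AGL2_stab0e1_moved r p : r \in AGL2 F :&: stab0e1 -> r != 1 ->
  (r p != p) = (p 0 1 != 0)%R.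
Proof.
move=> /AGL2_stab0e1_linear[A rE e1A] r1; rewrite rE.
have [p01|/negbNE/eqP p01] := boolP (p 0 1 != 0)%R.
  apply: contraNneq r1 => /(fixed_e1_line e1A p01) A1.
  by apply/eqP/permP=> x; rewrite rE A1 mulmx1 perm1.
by rewrite (row2_line p01) -scalemxAl e1A eqxx.
Qed.

Lemma AGL2_stab0e1_no_order4_sqr : (#|F| %% 4 = 3)%N ->
  forall u : {perm V}, #[u] = 4%N -> u ^+ 2 \notin AGL2 F :&: stab0e1.
Proof.
move=> F3 u ou; apply/negP=> u2R.
have u21 : u ^+ 2 != 1 by rewrite -order_dvdn ou.
have moved : [set p | (u ^+ 2) p != p] = [set p : V | p 0 1 != 0]%R.
  by apply/setP=> p; rewrite !inE AGL2_stab0e1_moved.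
have := order4_dvd_card_moved ou.
by rewrite moved card_off_line (negPf (ndvd4_sqr_sub F3)).
Qed.

End AffinePlane.

Theorem theorem1p7 (q : nat) (F : finFieldType) :
  #|F| = q -> (q %% 4 = 3)%N ->
  subgroup_perfect_code [set: {perm 'rV[F]_2}] (AGL2 F).
Proof.
move=> <- F3; set R := (AGL2_group F :&: stab0e1 F)%G.
have [T trT] := inv_rtransversal_exists (subsetIr _ _ : R \subset stab0e1 F)
  (fun x _ xV _ => self_inverse_dcoset_involution (AGL2_stab0e1_no_order4_sqr F3) xV).
have := inv_rtransversal_mul trT; rewrite AGL2_mul_stab0e1.
exact: inv_rtransversal_perfect_code (subsetT _).
Qed.
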